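(* For $\alpha\in\mathbb{R}\setminus\{0\}$ consider the three-stage explicit Runge--Kutta method with $$A=\begin{pmatrix}0&0&0\\ \tfrac23&0&0\\ \tfrac23-\tfrac1{4\alpha}&\tfrac1{4\alpha}&0\end{pmatrix},\qquad b^\top=\Big(\tfrac14,\ \tfrac34-\alpha,\ \alpha\Big).$$ Its positivity step-size coefficient is $$\gamma_\alpha=\begin{cases}0,&0\ne\alpha<\tfrac38,\\ 2\alpha,&\tfrac38\le\alpha<\tfrac12,\\ 1,&\tfrac12\le\alpha\le\tfrac34,\\ 0,&\alpha>\tfrac34.\end{cases}$$
   Context: For a three-stage explicit Runge--Kutta method with strictly lower-triangular $A=(a_{ij})$ and weights $b$, the positivity polynomials in the variables $x,y,z,u,v,w$ are $P_0=1-b_1z-b_2v+a_{21}b_2zv-b_3w+a_{31}b_3zw+a_{32}b_3vw-a_{32}a_{21}b_3zvw$, $P_1=b_1z+b_2v-a_{21}b_2yv-a_{21}b_2zv+b_3w-a_{31}b_3yw-a_{32}b_3uw+a_{32}a_{21}b_3yuw-a_{31}b_3zw-a_{32}b_3vw+a_{32}a_{21}b_3yvw+a_{32}a_{21}b_3zvw$, $P_2=a_{21}b_2yv+a_{31}b_3yw+a_{32}b_3uw-a_{32}a_{21}b_3xuw-a_{32}a_{21}b_3yuw-a_{32}a_{21}b_3yvw$, $P_3=a_{32}a_{21}b_3xuw$. They arise from applying the method to $u_k'=q_k(u,t)(u_{k-1}-u_k)/\Delta x$, which gives $u^{n+1}_k=\sum_{i=0}^3P_iu^n_{k-i}$ with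 $x=\xi^1_{k-2}$, $y=\xi^1_{k-1}$, $z=\xi^1_k$, $u=\xi^2_{k-1}$, $v=\xi^2_k$, $w=\xi^3_k$, where $\xi^j_\ell=\frac{\Delta t}{\Delta x}q_\ell(y^j,t_n+c_j\Delta t)$ for stage values $y^j$. The step-size coefficient is $\gamma=\sup\{\delta\ge0:P_0,\dots,P_3\ge0\text{ on }[0,\delta]^6\}$ (or $0$ if the set is empty). *)

From Stdlib Require Import Reals Lra.
Open Scope R_scope.

(* Positivity polynomials of a 3-stage explicit RK method with strictly
   lower-triangular A = (a21; a31 a32) and weights b = (b1,b2,b3). *)
Definition P0 (a21 a31 a32 b1 b2 b3 x y z u v w : R) : R :=
  1 - b1*z - b2*v + a21*b2*z*v - b3*w + a31*b3*z*w + a32*b3*v*w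
    - a32*a21*b3*z*v*w.

Definition P1 (a21 a31 a32 b1 b2 b3 x y z u v w : R) : R :=
  b1*z + b2*v - a21*b2*y*v - a21*b2*z*v + b3*w - a31*b3*y*w - a32*b3*u*w
    + a32*a21*b3*y*u*w - a31*b3*z*w - a32*b3*v*w + a32*a21*b3*y*v*w
    + a32*a21*b3*z*v*w.

Definition P2 (a21 a31 a32 b1 b2 b3 x y z u v w : R) : R :=
  a21*b2*y*v + a31*b3*y*w + a32*b3*u*w - a32*a21*b3*x*u*w
    - a32*a21*b3*y*u*w - a32*a21*b3*y*v*w.

Definition P3 (a21 a31 a32 b1 b2 b3 x y z u v w : R) : R :=
  a32*a21*b3*x*u*w.

Definition in01 (d t : R) : Prop := 0 <= t <= d.

Definition admissible (a21 a31 a32 b1 b2 b3 : R) (d : R) : Prop :=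
  0 <= d /\
  forall x y z u v w : R,
    in01 d x -> in01 d y -> in01 d z -> in01 d u -> in01 d v -> in01 d w ->
    0 <= P0 a21 a31 a32 b1 b2 b3 x y z u v w /\
    0 <= P1 a21 a31 a32 b1 b2 b3 x y z u v w /\
    0 <= P2 a21 a31 a32 b1 b2 b3 x y z u v w /\
    0 <= P3 a21 a31 a32 b1 b2 b3 x y z u v w.

Definition is_step_size_coeff (a21 a31 a32 b1 b2 b3 : R) (g : R) : Prop :=
  ((exists d, admissible a21 a31 a32 b1 b2 b3 d) /\
     is_lub (admissible a21 a31 a32 b1 b2 b3) g)
  \/ ((forall d, ~ admissible a21 a31 a32 b1 b2 b3 d) /\ g = 0).

Definition gamma_alpha (al : R) : R :=
  if Rlt_dec al (3/8) then 0
  else if Rlt_dec al (1/2) then 2*al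
  else if Rle_dec al (3/4) then 1
  else 0.

(* Substituting the coefficients, where α ≠ 0 lets the factors 1/(4α) cancel
   against b3 = α, turns P0, P1, P2 into polynomials that are affine in each
   variable, and P3 into xuw/6.  An affine function is nonnegative on [0,δ]
   as soon as it is at both endpoints, so positivity on [0,δ]^6 reduces to
   the vertices of the cube, where it holds for 3/8 ≤ α ≤ 3/4 and
   δ ≤ min(2α, 1).  Conversely, single vertices give the upper bounds: P1 is
   αδ at w = δ and (3/4 - α)δ at v = δ, while P2 is (2α/3 - 1/4)δ² at
   y = w = δ, δ²(2α - δ)/3 at x = y = u = w = δ, and δ²(1 - δ)/2 when only
   z vanishes. *)
From Stdlib Require Import Reals Lra Psatz.
Open Scope R_scope.

Lemma is_step_size_coeff_of_greatest (a21 a31 a32 b1 b2 b3 g : R) :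
  admissible a21 a31 a32 b1 b2 b3 g ->
  (forall d, g < d -> ~ admissible a21 a31 a32 b1 b2 b3 d) ->
  is_step_size_coeff a21 a31 a32 b1 b2 b3 g.
Proof.
  intros Hg Hgt. left. split; [exists g; exact Hg | split].
  - intros d Hd. destruct (Rle_lt_dec d g) as [Hle | Hlt]; [exact Hle |].
    exfalso. exact (Hgt d Hlt Hd).
  - intros b Hb. exact (Hb g Hg).
Qed.

Lemma affine_nonneg_of_endpoints (f : R -> R) (d t : R) :
  0 < d -> 0 <= t <= d -> (forall s, d * f s = (d - s) * f 0 + s * f d) ->
  0 <= f 0 -> 0 <= f d -> 0 <= f t.
Proof.
  intros Hd Ht Haff Hf0 Hfd.
  assert (0 <= d * f t).
  { rewrite Haff. apply Rplus_le_le_0_compat; apply Rmult_le_pos; lra. }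
  nra.
Qed.

(* Replaces the goal [0 <= e] by the two goals obtained by substituting [0]
   and [d] for the variable [t], in which [e] must be affine. *)
Ltac endpoints d t :=
  lazymatch goal with |- 0 <= ?e =>
    lazymatch eval pattern t in e with ?f _ =>
      apply (affine_nonneg_of_endpoints f d t);
      [assumption | assumption | intro; cbv beta; field | cbv beta | cbv beta]
    end
  end.

(* P0, P1, P2 for the method of the proposition, using
   a31 b3 = 2α/3 - 1/4, a32 b3 = 1/4 and a32 a21 b3 = 1/6. *)
Definition P0_alpha (al z v w : R) : R :=
  1 - z/4 - (3/4 - al)*v + (2/3)*(3/4 - al)*z*v - al*w
    + (2*al/3 - 1/4)*z*w + v*w/4 - z*v*w/6.

Definition P1_alpha (al y z u v w : R) : R :=
  z/4 + (3/4 - al)*v - (2/3)*(3/4 - al)*(y + z)*v + al*w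
    - (2*al/3 - 1/4)*(y + z)*w - (u + v)*w/4 + (y*u*w + y*v*w + z*v*w)/6.

Definition P2_alpha (al x y u v w : R) : R :=
  (2/3)*(3/4 - al)*y*v + (2*al/3 - 1/4)*y*w + u*w/4
    - (x*u*w + y*u*w + y*v*w)/6.

Definition alpha_positive_on (al d : R) : Prop :=
  forall x y z u v w : R,
    in01 d x -> in01 d y -> in01 d z -> in01 d u -> in01 d v -> in01 d w ->
    0 <= P0_alpha al z v w /\ 0 <= P1_alpha al y z u v w /\
    0 <= P2_alpha al x y u v w.

Local Notation admissible_alpha al :=
  (admissible (2/3) (2/3 - 1/(4*al)) (1/(4*al)) (1/4) (3/4 - al) al).

Lemma admissible_alpha_iff (al d : R) : al <> 0 ->
  admissible_alpha al d <-> 0 <= d /\ alpha_positive_on al d.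
Proof.
  intros Hal.
  assert (HP0 : forall x y z u v w,
    P0 (2/3) (2/3 - 1/(4*al)) (1/(4*al)) (1/4) (3/4 - al) al x y z u v w
    = P0_alpha al z v w) by (intros; unfold P0, P0_alpha; field; exact Hal).
  assert (HP1 : forall x y z u v w,
    P1 (2/3) (2/3 - 1/(4*al)) (1/(4*al)) (1/4) (3/4 - al) al x y z u v w
    = P1_alpha al y z u v w) by (intros; unfold P1, P1_alpha; field; exact Hal).
  assert (HP2 : forall x y z u v w,
    P2 (2/3) (2/3 - 1/(4*al)) (1/(4*al)) (1/4) (3/4 - al) al x y z u v w
    = P2_alpha al x y u v w) by (intros; unfold P2, P2_alpha; field; exact Hal).
  assert (HP3 : forall x y z u v w,
    P3 (2/3) (2/3 - 1/(4*al)) (1/(4*al)) (1/4) (3/4 - al) al x y z u v w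
    = x*u*w/6) by (intros; unfold P3; field; exact Hal).
  unfold admissible, alpha_positive_on.
  split; intros [Hd Hpos]; split; try exact Hd;
    intros x y z u v w Hx Hy Hz Hu Hv Hw;
    specialize (Hpos x y z u v w Hx Hy Hz Hu Hv Hw);
    rewrite HP0, HP1, HP2 in *; rewrite ?HP3.
  - tauto.
  - unfold in01 in *.
    assert (0 <= x*u*w) by (repeat apply Rmult_le_pos; lra).
    repeat split; try tauto; lra.
Qed.

Lemma admissible_alpha_zero (al : R) : al <> 0 -> admissible_alpha al 0.
Proof.
  intros Hal. apply admissible_alpha_iff; [exact Hal |].
  split; [lra |]. unfold alpha_positive_on, in01.
  intros x y z u v w Hx Hy Hz Hu Hv Hw.
  replace x with 0 by lra; replace y with 0 by lra; replace z with 0 by lra;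
    replace u with 0 by lra; replace v with 0 by lra; replace w with 0 by lra.
  unfold P0_alpha, P1_alpha, P2_alpha. repeat split; lra.
Qed.

Section LowerBound.

Variables al d : R.
Hypothesis Hal : 3/8 <= al <= 3/4.
Hypothesis Hd : 0 < d.
Hypothesis Hd_twice : d <= 2*al.
Hypothesis Hd_one : d <= 1.

Lemma P0_alpha_nonneg (z v w : R) :
  0 <= z <= d -> 0 <= v <= d -> 0 <= w <= d -> 0 <= P0_alpha al z v w.
Proof.
  intros. unfold P0_alpha.
  endpoints d z; endpoints d v; endpoints d w; nra.
Qed.

Lemma P1_alpha_nonneg (y z u v w : R) :
  0 <= y <= d -> 0 <= z <= d -> 0 <= u <= d -> 0 <= v <= d -> 0 <= w <= d ->
  0 <= P1_alpha al y z u v w.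
Proof.
  intros. unfold P1_alpha.
  (* the vertices with v = d and w = 0 need this product *)
  assert (0 <= (3/4 - al) * d) by nra.
  endpoints d y; endpoints d z; endpoints d u; endpoints d v; endpoints d w;
    nra.
Qed.

Lemma P2_alpha_nonneg (x y u v w : R) :
  0 <= x <= d -> 0 <= y <= d -> 0 <= u <= d -> 0 <= v <= d -> 0 <= w <= d ->
  0 <= P2_alpha al x y u v w.
Proof.
  intros. unfold P2_alpha.
  endpoints d x; endpoints d y; endpoints d u; endpoints d v; endpoints d w;
    nra.
Qed.

Lemma alpha_positive_on_of_le : alpha_positive_on al d.
Proof.
  unfold alpha_positive_on, in01. intros.
  split; [| split]; [apply P0_alpha_nonneg | apply P1_alpha_nonneg
                     | apply P2_alpha_nonneg]; assumption.
Qed.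

End LowerBound.

Lemma admissible_alpha_of_le (al d : R) :
  3/8 <= al <= 3/4 -> 0 < d -> d <= 2*al -> d <= 1 -> admissible_alpha al d.
Proof.
  intros Hal Hd Hd_twice Hd_one.
  apply admissible_alpha_iff; [lra |].
  split; [lra | apply alpha_positive_on_of_le; assumption].
Qed.


Lemma not_admissible_alpha_outside (al d : R) :
  al <> 0 -> al < 3/8 \/ 3/4 < al -> 0 < d -> ~ admissible_alpha al d.
Proof.
  intros Hal Hout Hd Had.
  apply admissible_alpha_iff in Had as [_ Hpos]; [| exact Hal].
  assert (Hdd : 0 < d * d) by nra.
  destruct (Rlt_le_dec al 0) as [Hneg | Hnn].
  - destruct (Hpos 0 0 0 0 0 d) as [_ [HP1 _]]; unfold in01; try lra.
    unfold P1_alpha in HP1. nra.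
  - destruct Hout as [Hsmall | Hlarge].
    + destruct (Hpos 0 d 0 0 0 d) as [_ [_ HP2]]; unfold in01; try lra.
      unfold P2_alpha in HP2. nra.
    + destruct (Hpos 0 0 0 0 d 0) as [_ [HP1 _]]; unfold in01; try lra.
      unfold P1_alpha in HP1. nra.
Qed.

Lemma not_admissible_alpha_gt_twice (al d : R) :
  al <> 0 -> 0 < d -> 2*al < d -> ~ admissible_alpha al d.
Proof.
  intros Hal Hd Hgt Had.
  apply admissible_alpha_iff in Had as [_ Hpos]; [| exact Hal].
  destruct (Hpos d d 0 d 0 d) as [_ [_ HP2]]; unfold in01; try lra.
  unfold P2_alpha in HP2.
  assert (0 < d * d) by nra. nra.
Qed.

Lemma not_admissible_alpha_gt_one (al d : R) :
  al <> 0 -> 1 < d -> ~ admissible_alpha al d.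
Proof.
  intros Hal Hgt Had.
  apply admissible_alpha_iff in Had as [_ Hpos]; [| exact Hal].
  destruct (Hpos d d 0 d d d) as [_ [_ HP2]]; unfold in01; try lra.
  unfold P2_alpha in HP2.
  assert (0 < d * d) by nra. nra.
Qed.

Theorem proposition5 (al : R) (Hal : al <> 0) :
  is_step_size_coeff (2/3) (2/3 - 1/(4*al)) (1/(4*al))
                     (1/4) (3/4 - al) al (gamma_alpha al).
Proof.
  unfold gamma_alpha.
  destruct (Rlt_dec al (3/8)) as [Hsmall | Hge].
  { apply is_step_size_coeff_of_greatest.
    - exact (admissible_alpha_zero al Hal).
    - intros d Hd. apply not_admissible_alpha_outside; auto. }
  destruct (Rlt_dec al (1/2)) as [Hhalf | Hge_half].
  { apply is_step_size_coeff_of_greatest.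
    - apply admissible_alpha_of_le; lra.
    - intros d Hd. apply not_admissible_alpha_gt_twice; lra. }
  destruct (Rle_dec al (3/4)) as [Hle | Hlarge].
  { apply is_step_size_coeff_of_greatest.
    - apply admissible_alpha_of_le; lra.
    - intros d Hd. apply not_admissible_alpha_gt_one; lra. }
  apply is_step_size_coeff_of_greatest.
  - exact (admissible_alpha_zero al Hal).
  - intros d Hd. apply not_admissible_alpha_outside; auto; lra.
Qed.
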